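(* Let $(\mathcal{X}_1,\Phi_1)$ be a connected matroid that is even representable but not almost odd representable, and let $(\mathcal{X}_2,\Phi_2)$ be a connected matroid that is odd representable but not almost even representable, where $\mathcal{X}_1\cap\mathcal{X}_2=\emptyset$. Let $(\mathcal{X},\Phi)$ be their direct sum: $\mathcal{X}=\mathcal{X}_1\cup\mathcal{X}_2$ and $\Phi(\mathcal{A})=\Phi_1(\mathcal{A}\cap\mathcal{X}_1)+\Phi_2(\mathcal{A}\cap\mathcal{X}_2)$ for all $\mathcal{A}\subseteq\mathcal{X}$. Let $0<\epsilon\le\min(\Phi_1(\mathcal{X}_1),\Phi_2(\mathcal{X}_2))$ and define $\Phi^\epsilon(\mathcal{A})=\min\big(\Phi(\mathcal{A}),\ \Phi(\mathcal{X})-\epsilon\big)$ for all $\mathcal{A}\subseteq\mathcal{X}$. Then $(\mathcal{X},\Phi^\epsilon)$ is not cc-representable.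
   Context: A polymatroid $(\mathcal{X},\mathbf{h})$ is a finite ground set $\mathcal{X}=\{X_1,\dots,X_n\}$ with $\mathbf{h}:2^{\mathcal{X}}\to\mathbb{R}_{\ge0}$ satisfying $\mathbf{h}(\emptyset)=0$, monotonicity and submodularity; a matroid additionally has integer values with $\mathbf{h}(\mathcal{A})\le|\mathcal{A}|$. A matroid is connected if every two elements lie in a common circuit. The polymatroid is $q$-representable if there exist subspaces $V_1,\dots,V_n$ of a vector space over $\mathbb{F}_q$ with $\mathbf{h}(\{X_i:i\in\alpha\})=\dim\langle V_i:i\in\alpha\rangle$ for all $\alpha$; representable if $q$-representable for some $q$; even representable if $2^m$-representable for some positive integer $m$; odd representable if $p^m$-representable for some odd prime $p$ and positive integer $m$. Rank functions are vectors in $\mathbb{R}^{2^{|\mathcal{X}|}}$. A rank function is almost even (resp. almost odd) representable if it equals $\lim_{i\to\infty}c_i\mathbf{g}_i$ for some even (resp. odd) representable rank functions $\mathbf{g}_i$ on the same ground set and positive reals $c_i$. It is cc-representable if it lies in the closure of the minimal convex cone containing all representable rank functions on $\mathcal{X}$. *)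

From HB Require Import structures.
From mathcomp Require Import all_boot all_order all_algebra.
From mathcomp Require Import all_classical all_reals all_analysis.
Set Implicit Arguments.
Unset Strict Implicit.
Unset Printing Implicit Defensive.
Import Order.TTheory GRing.Theory Num.Theory.
Import numFieldNormedType.Exports.
Local Open Scope classical_set_scope.
Local Open Scope ring_scope.

Section Polymatroids.
Variable R : realType.
Variable T : finType.

Definition rankfun := {set T} -> R.

Definition polymatroid (h : rankfun) : Prop :=
  [/\ h finset.set0 = 0,
      (forall A, 0 <= h A),
      (forall A B : {set T}, A \subset B -> h A <= h B) &
      (forall A B : {set T}, h (A :|: B) + h (A :&: B) <= h A + h B)].

Definition matroid (h : rankfun) : Prop :=
  [/\ polymatroid h,
      (forall A, exists n : nat, h A = n%:R) &
      (forall A, h A <= (#|A|)%:R)].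

Definition dependent (h : rankfun) (A : {set T}) : Prop := h A < (#|A|)%:R.

Definition circuit (h : rankfun) (C : {set T}) : Prop :=
  dependent h C /\ (forall D : {set T}, D \proper C -> ~ dependent h D).

Definition connected_matroid (h : rankfun) : Prop :=
  matroid h /\
  (forall x y : T, x != y -> exists C, circuit h C /\ x \in C /\ y \in C).

(* q-representable: subspaces V_x (row spaces of matrices) of F^m, #|F| = q *)
Definition q_representable (h : rankfun) (q : nat) : Prop :=
  exists (F : finFieldType) (m : nat) (V : T -> 'M[F]_m),
    #|F| = q /\
    forall A : {set T}, h A = (\rank (\sum_(x in A) V x)%MS)%:R.

Definition representable (h : rankfun) : Prop :=
  exists q, q_representable h q.

Definition even_representable (h : rankfun) : Prop :=
  exists m : nat, (0 < m)%N /\ q_representable h (2 ^ m).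

Definition odd_representable (h : rankfun) : Prop :=
  exists p m : nat, [/\ prime p, odd p, (0 < m)%N & q_representable h (p ^ m)].

Definition almost_even_representable (h : rankfun) : Prop :=
  exists (c : nat -> R) (g : nat -> rankfun),
    [/\ (forall i, 0 < c i), (forall i, even_representable (g i)) &
        (forall A, (fun i => c i * g i A) @ \oo --> h A)].

Definition almost_odd_representable (h : rankfun) : Prop :=
  exists (c : nat -> R) (g : nat -> rankfun),
    [/\ (forall i, 0 < c i), (forall i, odd_representable (g i)) &
        (forall A, (fun i => c i * g i A) @ \oo --> h A)].

Definition convex_cone (C : rankfun -> Prop) : Prop :=
  (forall f g, C f -> C g -> C (fun A => f A + g A)) /\
  (forall (c : R) f, 0 <= c -> C f -> C (fun A => c * f A)).

Definition rep_cone (h : rankfun) : Prop :=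
  forall C : rankfun -> Prop, convex_cone C ->
    (forall g, representable g -> C g) -> C h.

(* closure in R^(2^|X|) (sup-metric on the finitely many coordinates) *)
Definition cc_representable (h : rankfun) : Prop :=
  forall e : R, 0 < e ->
    exists g, rep_cone g /\ forall A, `|h A - g A| < e.

End Polymatroids.

Definition direct_sum (R : realType) (T1 T2 : finType)
  (h1 : rankfun R T1) (h2 : rankfun R T2) : rankfun R (T1 + T2)%type :=
  fun A => h1 (inl @^-1: A) + h2 (inr @^-1: A).

Definition truncate (R : realType) (T : finType) (h : rankfun R T) (eps : R)
  : rankfun R T := fun A => Num.min (h A) (h finset.setT - eps).

(* A cone combination of representable rank functions splits into an
   odd-representable and an even-representable part.  The defect of a
   polymatroid t with respect to a connected matroid P (how badly t violates
   the modular pairs and rank-preserving inclusions of P) is linear in t, is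
   O(e) when t is e-close to P, and bounds the distance from t to a multiple of
   P.  As Phi1 is not almost odd representable, an odd-representable
   polymatroid stays a fixed relative distance away from the multiples of Phi1,
   so in an e-approximation of Phi^eps the odd part has mass O(e) on X1, and
   likewise the even part has mass O(e) on X2.  Monotonicity then forces the
   approximation to have total rank at least Phi1(X1) + Phi2(X2) - O(e),
   whereas Phi^eps(X) = Phi1(X1) + Phi2(X2) - eps. *)

From mathcomp Require Import all_boot all_order all_algebra.
From mathcomp Require Import all_classical all_reals all_analysis.
From mathcomp Require Import ring lra finfield.
(* Re-imported so that [subsetP], [set0], [setU0], ... denote the finite-set versions. *)
From mathcomp Require Import fintype finset.
Set Implicit Arguments.
Unset Strict Implicit.
Unset Printing Implicit Defensive.
Import Order.TTheory GRing.Theory Num.Theory.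
Import numFieldNormedType.Exports.
Local Open Scope ring_scope.

Lemma polymatroid_span (R : realType) (T : finType) (h : rankfun R T) (B S : {set T}) :
  polymatroid h -> {in S, forall x, h (x |: B) = h B} -> h (B :|: S) = h B.
Proof.
move=> [_ _ hmono hsub]; move: {2}#|S| (erefl #|S|) => k.
elim: k S => [|k IH] S cardS spanS.
  by move/eqP: cardS; rewrite cards_eq0 => /eqP ->; rewrite setU0.
have [x xS] : exists x, x \in S by apply/set0Pn; rewrite -card_gt0 cardS.
have IHx : h (B :|: S :\ x) = h B.
  apply: IH => [|y /setD1P[_ yS]]; last exact: spanS.
  by move: cardS; rewrite (cardsD1 x) xS add1n => -[].
have joinE : (B :|: S :\ x) :|: (x |: B) = B :|: S.
  by rewrite setUC -setUA [B :|: (B :|: _)]setUA setUid setUCA setD1K.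
have := hsub (B :|: S :\ x) (x |: B); rewrite joinE IHx spanS //.
have := hmono B ((B :|: S :\ x) :&: (x |: B)).
rewrite subsetI subsetUl subsetUr => /(_ isT).
have := hmono _ _ (subsetUl B S); lra.
Qed.

Section MatroidFacts.
Variables (R : realType) (T : finType) (h : rankfun R T).
Hypothesis h_matroid : matroid h.

Lemma matroid_rank_nat (A : {set T}) : exists2 n : nat, h A = n%:R & (n <= #|A|)%N.
Proof.
case: h_matroid => _ hnat hcard; have [n hn] := hnat A; exists n => //.
by have := hcard A; rewrite hn ler_nat.
Qed.

Lemma indep_subset (I J : {set T}) : J \subset I -> h I = #|I|%:R -> h J = #|J|%:R.
Proof.
move=> JI hI; have [[h0 _ _ hsub] _ hcard] := h_matroid.
have joinE : J :|: (I :\: J) = I by rewrite -{1}(setIidPr JI) setID.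
have meetE : J :&: (I :\: J) = set0 by rewrite setDE setICA setICr setI0.
have := hsub J (I :\: J); rewrite joinE meetE h0 addr0 hI.
rewrite -(cardsID J I) (setIidPr JI) natrD.
have := hcard J; have := hcard (I :\: J).
move=> le1 le2 le3; apply/eqP; rewrite eq_le le2 /=; lra.
Qed.

Lemma circuitD1_indep (C : {set T}) x : circuit h C -> x \in C -> h (C :\ x) = #|C :\ x|%:R.
Proof.
move=> [_ minC] xC; have [_ _ hcard] := h_matroid.
apply/eqP; rewrite eq_le hcard /= leNgt; apply/negP.
exact: minC (properD1 xC).
Qed.

Lemma rank_circuitD1 (C : {set T}) x : circuit h C -> x \in C -> h C = h (C :\ x).
Proof.
move=> circC xC; have [[_ _ hmono _] _ _] := h_matroid.
have [n hn _] := matroid_rank_nat C.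
have := hmono _ _ (subD1set C x); have := proj1 circC; rewrite /dependent.
rewrite hn circuitD1_indep // (cardsD1 x C) xC ltr_nat ler_nat add1n ltnS => le1 le2.
by apply/eqP; rewrite eqr_nat eqn_leq le1 le2.
Qed.

Lemma exists_basis (A : {set T}) :
  exists B : {set T}, [/\ B \subset A, h B = #|B|%:R & h A = h B].
Proof.
have [[h0 _ hmono _] _ hcard] := h_matroid.
pose indep (B : {set T}) := (B \subset A) && (h B == #|B|%:R).
have indep0 : indep set0 by rewrite /indep sub0set h0 cards0 eqxx.
case: (arg_maxnP (fun B : {set T} => #|B|) indep0) => B /andP[BA /eqP hB] Bmax.
exists B; split => //; rewrite -(setUidPr BA) polymatroid_span //; first by case: h_matroid.
move=> x xA; case: (boolP (x \in B)) => xB; first by rewrite (setUidPr _) // sub1set.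
have [n hn le_n] := matroid_rank_nat (x |: B); move: le_n.
rewrite cardsU1 xB add1n leq_eqVlt ltnS => /orP[/eqP n_eq|n_le].
  have: indep (x |: B) by rewrite /indep subUset sub1set xA BA hn n_eq cardsU1 xB /=.
  by move/Bmax; rewrite cardsU1 xB /= ltnn.
have := hmono _ _ (subsetUr [set x] B); rewrite hn hB ler_nat => ge_n.
by congr (_%:R); apply/eqP; rewrite eqn_leq n_le ge_n.
Qed.

End MatroidFacts.

Section Defect.
Variables (R : realType) (T : finType) (P : rankfun R T).
Implicit Types (t f : rankfun R T) (A B : {set T}).

Definition tight_gap t A B : R :=
  if (A \subset B) && (P A == P B) then t B - t A else 0.

Definition modular_gap t A B : R :=
  if P A + P B == P (A :|: B) + P (A :&: B)
  then t A + t B - t (A :|: B) - t (A :&: B) else 0.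

Definition defect t : R :=
  \sum_A \sum_B (tight_gap t A B + modular_gap t A B).

Lemma gaps_ge0 t A B :
  polymatroid t -> 0 <= tight_gap t A B /\ 0 <= modular_gap t A B.
Proof.
case=> _ _ tmono tsub; rewrite /tight_gap /modular_gap; split.
  by case: ifP => // /andP[AB _]; rewrite subr_ge0 tmono.
by case: ifP => // _; have := tsub A B; lra.
Qed.

Lemma defect_ge0 t : polymatroid t -> 0 <= defect t.
Proof.
move=> tpoly; apply: sumr_ge0 => A _; apply: sumr_ge0 => B _.
by have [] := gaps_ge0 A B tpoly; lra.
Qed.

Lemma gaps_le_defect t A B :
  polymatroid t -> tight_gap t A B + modular_gap t A B <= defect t.
Proof.
move=> tpoly; have gap_ge0 A' B' := gaps_ge0 A' B' tpoly.
rewrite /defect (bigD1 A) //= (bigD1 B) //= -addrA lerDl.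
apply: addr_ge0; first by apply: sumr_ge0 => B' _; have [] := gap_ge0 A B'; lra.
by apply: sumr_ge0 => A' _; apply: sumr_ge0 => B' _; have [] := gap_ge0 A' B'; lra.
Qed.

Lemma tight_gap_le_defect t A B : polymatroid t ->
  A \subset B -> P A = P B -> t B - t A <= defect t.
Proof.
move=> tpoly AB PAB; have := gaps_le_defect A B tpoly; have [_] := gaps_ge0 A B tpoly.
by rewrite /tight_gap AB PAB eqxx /=; lra.
Qed.

Lemma modular_gap_le_defect t A B : polymatroid t ->
  P A + P B = P (A :|: B) + P (A :&: B) ->
  t A + t B - t (A :|: B) - t (A :&: B) <= defect t.
Proof.
move=> tpoly PAB; have := gaps_le_defect A B tpoly; have [] := gaps_ge0 A B tpoly.
by rewrite /modular_gap PAB eqxx /=; lra.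
Qed.

Lemma defect_sum (X : Type) (s : seq X) (c : X -> R) (r : X -> rankfun R T) :
  defect (fun A => \sum_(x <- s) c x * r x A) = \sum_(x <- s) c x * defect (r x).
Proof.
elim: s => [|x s IH].
  rewrite big_nil /defect big1 // => A _; rewrite big1 // => B _.
  by rewrite /tight_gap /modular_gap !big_nil; case: ifP; case: ifP => _ _; ring.
rewrite big_cons -IH /defect mulr_sumr -big_split; apply: eq_bigr => A _.
rewrite mulr_sumr -big_split; apply: eq_bigr => B _ /=.
by rewrite /tight_gap /modular_gap !big_cons; case: ifP; case: ifP => _ _; ring.
Qed.

Lemma defect_le_dist f (eta : R) : (forall A, `|f A - P A| <= eta) ->
  defect f <= 6 * eta *+ #|{set T}| ^ 2.
Proof.
move=> close; have eta_ge0 : 0 <= eta := le_trans (normr_ge0 _) (close set0).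
have -> : 6 * eta *+ #|{set T}| ^ 2 = \sum_(A : {set T}) \sum_(B : {set T}) 6 * eta.
  by rewrite !sumr_const -mulrnA.
apply: ler_sum => A _; apply: ler_sum => B _; rewrite /tight_gap /modular_gap.
move: (close A) (close B) (close (A :|: B)) (close (A :&: B)); rewrite !ler_norml.
move=> /andP[? ?] /andP[? ?] /andP[? ?] /andP[? ?].
by case: ifP => [/andP[_ /eqP ?]|_]; case: ifP => [/eqP ?|_]; lra.
Qed.

End Defect.

Section Proportionality.
Variables (R : realType) (T : finType) (P t : rankfun R T).
Hypotheses (P_matroid : matroid P) (t_poly : polymatroid t).
Local Notation D := (defect P t).

Lemma indep_singletons_gap (I : {set T}) : P I = #|I|%:R ->
  0 <= \sum_(x in I) t [set x] - t I <= #|I|%:R * D.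
Proof.
have [t0 _ _ tsub] := t_poly; have [[P0 _ _ _] _ _] := P_matroid.
have D_ge0 := defect_ge0 P t_poly.
move: {2}#|I| (erefl #|I|) => k; elim: k I => [|k IH] I cardI PI.
  move/eqP: cardI; rewrite cards_eq0 => /eqP ->.
  by rewrite big_set0 t0 subrr cards0 mul0r lexx.
have [x xI] : exists x, x \in I by apply/set0Pn; rewrite -card_gt0 cardI.
have cardIx : #|I :\ x| = k by move: cardI; rewrite (cardsD1 x) xI add1n => -[].
have PIx : P (I :\ x) = #|I :\ x|%:R := indep_subset P_matroid (subD1set I x) PI.
have Px : P [set x] = 1 by rewrite (indep_subset P_matroid _ PI) ?cards1 ?sub1set.
have joinE : (I :\ x) :|: [set x] = I by rewrite setUC setD1K.
have meetE : (I :\ x) :&: [set x] = set0.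
  by rewrite setDE -setIA [~: _ :&: _]setIC setICr setI0.
have := tsub (I :\ x) [set x]; rewrite joinE meetE t0 => t_subadd.
have gap : t (I :\ x) + t [set x] - t I <= D.
  have := modular_gap_le_defect (A := I :\ x) (B := [set x]) t_poly.
  rewrite joinE meetE t0 subr0; apply.
  by rewrite PI Px PIx P0 cardI cardIx addr0 -addn1 natrD.
have /andP[IH0 IH1] := IH _ cardIx PIx; rewrite cardIx in IH1.
rewrite (big_setD1 x xI) /= cardI -addn1 natrD mulrDl mul1r; apply/andP; split; lra.
Qed.

Hypothesis P_connected :
  forall x y : T, x != y -> exists C, circuit P C /\ x \in C /\ y \in C.

Lemma singleton_gap x y : `|t [set x] - t [set y]| <= #|T|%:R * D.
Proof.
have D_ge0 := defect_ge0 P t_poly; have [_ _ tmono _] := t_poly.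
have [->|xy] := eqVneq x y; first by rewrite subrr normr0 mulr_ge0.
have [C [circC [xC yC]]] := P_connected xy.
have gaps z : z \in C -> [/\
    0 <= \sum_(w in C :\ z) t [set w] - t (C :\ z) <= (#|C|.-1)%:R * D,
    0 <= t C - t (C :\ z) <= D &
    \sum_(w in C) t [set w] = t [set z] + \sum_(w in C :\ z) t [set w]].
  move=> zC; split; last exact: big_setD1.
    have -> : #|C|.-1 = #|C :\ z| by rewrite (cardsD1 z C) zC.
    exact/indep_singletons_gap/circuitD1_indep.
  rewrite subr_ge0 tmono ?subD1set //=.
  by apply: tight_gap_le_defect (subD1set C z) _ => //; rewrite -rank_circuitD1.
have [/andP[Sx0 Sx1] /andP[Gx0 Gx1] sumx] := gaps x xC.
have [/andP[Sy0 Sy1] /andP[Gy0 Gy1] sumy] := gaps y yC.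
have cardC : (#|C|.-1)%:R + 1 <= #|T|%:R :> R.
  rewrite natr1 ler_nat prednK ?max_card //.
  by rewrite card_gt0; apply/set0Pn; exists x.
have : ((#|C|.-1)%:R + 1) * D <= #|T|%:R * D by apply: ler_wpM2r.
rewrite ler_norml mulrDl mul1r => CT; apply/andP; split; lra.
Qed.

Lemma proportional_gap x0 A :
  `|t A - t [set x0] * P A| <= (1 + #|T|%:R + #|T|%:R ^+ 2) * D.
Proof.
have D_ge0 := defect_ge0 P t_poly; have [_ _ tmono _] := t_poly.
have [B [BA PB PA]] := exists_basis P_matroid A.
have gapAB : 0 <= t A - t B <= D.
  by rewrite subr_ge0 tmono //= tight_gap_le_defect.
have /andP[gapB0 gapB1] := indep_singletons_gap PB.
set n := #|T|%:R.
have sumB : `|\sum_(z in B) t [set z] - #|B|%:R * t [set x0]| <= #|B|%:R * (n * D).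
  rewrite [#|B|%:R * t _]mulr_natl [#|B|%:R * (n * D)]mulr_natl -!sumr_const -sumrB.
  apply: le_trans (ler_norm_sum _ _ _) _.
  by apply: ler_sum => z _; apply: singleton_gap.
have cardB : #|B|%:R <= n by rewrite ler_nat max_card.
have : #|B|%:R * D <= n * D by apply: ler_wpM2r.
have : #|B|%:R * (n * D) <= n * (n * D) by apply: ler_wpM2r; rewrite ?mulr_ge0.
move: sumB gapAB; rewrite PA PB !ler_norml expr2 => /andP[? ?] /andP[? ?] ? ?.
apply/andP; split; nra.
Qed.

Lemma cross_gap A : `|P setT * t A - P A * t setT| <=
  2 * P setT * ((1 + #|T|%:R + #|T|%:R ^+ 2) * D).
Proof.
have [[P0 P_ge0 Pmono _] _ _] := P_matroid; set K := _ * D.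
have [x0 _|T_empty] := pickP (@predT T); last first.
  have setT0 (B : {set T}) : B = set0 by apply/setP => x; have := T_empty x.
  by rewrite (setT0 A) (setT0 setT) P0 !(mul0r, mulr0) subrr normr0.
have K_ge0 : 0 <= K by rewrite mulr_ge0 ?defect_ge0.
have PA_le : P A <= P setT by rewrite Pmono ?subsetT.
have -> : P setT * t A - P A * t setT =
  P setT * (t A - t [set x0] * P A) - P A * (t setT - t [set x0] * P setT) by ring.
apply: le_trans (ler_normB _ _) _; rewrite !normrM !(ger0_norm (P_ge0 _)).
have := proportional_gap x0 A; have := proportional_gap x0 setT; rewrite -/K.
move=> gapT gapA; have := ler_wpM2l (P_ge0 setT) gapA.
have := ler_wpM2l (P_ge0 A) gapT; have := ler_wpM2r K_ge0 PA_le; lra.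
Qed.

End Proportionality.

Section Concentration.
Variables (R : realType) (T : finType) (Q : rankfun R T -> Prop).
Local Open Scope classical_set_scope.

Definition almost (h : rankfun R T) : Prop :=
  exists (c : nat -> R) (g : nat -> rankfun R T),
    [/\ (forall i, 0 < c i), (forall i, Q (g i)) &
        (forall A, (fun i => c i * g i A) @ \oo --> h A)].

Local Open Scope ring_scope.
Variable P : rankfun R T.
Hypotheses (P_pos : 0 < P setT) (P_not_almost : ~ almost P).

Lemma not_almost_far : exists2 d : R, 0 < d & forall g, Q g -> 0 < g setT ->
  exists A, d <= `|P setT / g setT * g A - P A|.
Proof.
apply: contrapT => not_far; apply: P_not_almost.
have close n : exists g, [/\ Q g, 0 < g setT &
    forall A, `|P setT / g setT * g A - P A| < n.+1%:R^-1].
  apply: contrapT => not_close; apply: not_far.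
  exists n.+1%:R^-1; first by rewrite invr_gt0.
  move=> g Qg g_pos; apply: contrapT => not_ex; apply: not_close; exists g; split => // A.
  by rewrite ltNge; apply/negP => le; apply: not_ex; exists A.
have [g gP] := choice close.
exists (fun i => P setT / g i setT), g; split => [i|i|A].
- by have [_ g_pos _] := gP i; rewrite divr_gt0.
- by have [] := gP i.
apply/cvgrPdistC_lt => e e_pos.
apply: filterS (near_infty_natSinv_lt (PosNum e_pos)) => n.
by have [_ _ gn] := gP n; apply: lt_trans (gn A).
Qed.

Hypothesis P_connected : connected_matroid P.

Lemma Q_total_le_defect : exists2 C : R, 0 <= C &
  forall r, polymatroid r -> Q r -> r setT <= C * defect P r.
Proof.
have [d d_pos far] := not_almost_far; have [P_matroid P_conn] := P_connected.
set K : R := 1 + #|T|%:R + #|T|%:R ^+ 2.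
have K_ge0 : 0 <= K by rewrite !addr_ge0 ?exprn_ge0.
have C_ge0 : 0 <= 2 * P setT * K / d.
  by rewrite !mulr_ge0 ?invr_ge0 ?(ltW P_pos) ?(ltW d_pos).
exists (2 * P setT * K / d) => // r r_poly Qr; have D_ge0 := defect_ge0 P r_poly.
have [rT0|rT_neq0] := eqVneq (r setT) 0; first by rewrite rT0 mulr_ge0.
have rT_pos : 0 < r setT by rewrite lt_neqAle eq_sym rT_neq0; case: r_poly => _ ->.
have [A farA] := far r Qr rT_pos.
have : d * r setT <= `|P setT * r A - P A * r setT|.
  have -> : P setT * r A - P A * r setT = (P setT / r setT * r A - P A) * r setT.
    by field; rewrite lt0r_neq0.
  by rewrite normrM (gtr0_norm rT_pos) ler_pM2r.
move/le_trans/(_ (cross_gap P_matroid r_poly P_conn A)) => le_cross.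
rewrite -(ler_pM2l d_pos) mulrA mulrCA mulfV ?lt0r_neq0 // mulr1.
by apply: le_trans le_cross _; rewrite -/K mulrA.
Qed.

Lemma Q_mass_bound : exists2 M : R, 0 <= M &
  forall (X : Type) (s : seq X) (c : X -> R) (r : X -> rankfun R T) (b : pred X)
         (eta : R),
  (forall x, 0 <= c x) -> (forall x, polymatroid (r x)) -> (forall x, b x -> Q (r x)) ->
  (forall A, `|\sum_(x <- s) c x * r x A - P A| <= eta) ->
  \sum_(x <- s | b x) c x * r x setT <= M * eta.
Proof.
have [C C_ge0 QC] := Q_total_le_defect.
exists (C * 6 *+ #|{set T}| ^ 2); first by rewrite mulrn_wge0 ?mulr_ge0.
move=> X s c r b eta c_ge0 r_poly bQ close.
have D_ge0 x : 0 <= c x * defect P (r x) by rewrite mulr_ge0 ?defect_ge0.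
apply: le_trans (_ : C * \sum_(x <- s) c x * defect P (r x) <= _).
  rewrite [X in _ <= C * X](bigID b) /= mulrDr mulr_sumr -[X in X <= _]addr0.
  apply: lerD.
    by apply: ler_sum => x bx; rewrite mulrCA ler_wpM2l // QC //; apply: bQ.
  by rewrite mulr_ge0 ?sumr_ge0.
by rewrite -defect_sum mulrnAl -mulrA -mulrnAr ler_wpM2l // defect_le_dist.
Qed.

End Concentration.

Section Representations.
Variables (R : realType) (T : finType).
Implicit Type r : rankfun R T.

Lemma representable_polymatroid r : representable r -> polymatroid r.
Proof.
move=> [q [F [m [V [_ rE]]]]]; split => [|A|A B AB|A B].
- by rewrite rE big_set0 mxrank0.
- by rewrite rE.
- rewrite !rE ler_nat; apply: mxrankS; apply/sumsmx_subP => x xA.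
  by apply: (sumsmx_sup x) => //; apply: (subsetP AB).
rewrite !rE -!natrD ler_nat.
set SA := (\sum_(x in A) V x)%MS; set SB := (\sum_(x in B) V x)%MS.
rewrite -(mxrank_sum_cap SA SB); apply: leq_add; apply: mxrankS.
  apply/sumsmx_subP => x; rewrite inE => /orP[xA|xB].
    exact: submx_trans (sumsmx_sup x _ _) (addsmxSl SA SB).
  exact: submx_trans (sumsmx_sup x _ _) (addsmxSr SA SB).
by rewrite sub_capmx; apply/andP; split; apply/sumsmx_subP => x /setIP[xA xB];
  apply: (sumsmx_sup x).
Qed.

Lemma representable_even_or_odd r :
  representable r -> even_representable r \/ odd_representable r.
Proof.
move=> [q [F [m [V [_ rE]]]]]; have [p p_prime charFp] := finPcharP F.
set k := logn p #|F|.
have cardF : #|F| = (p ^ k)%N := card_pprimeChar charFp.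
have k_gt0 : (0 < k)%N.
  by rewrite lt0n; apply: contraTneq (card_finNzRing_gt1 F) => k0; rewrite cardF k0.
have rep_pk : q_representable r (p ^ k) by exists F, m, V.
have [p2|p_odd] := even_prime p_prime; first by left; exists k; rewrite -p2.
by right; exists p, k.
Qed.

Definition restrict (T1 : finType) (f : T1 -> T) r : rankfun R T1 :=
  fun A => r (f @: A).

Lemma polymatroid_restrict (T1 : finType) (f : T1 -> T) r :
  injective f -> polymatroid r -> polymatroid (restrict f r).
Proof.
move=> f_inj [r0 r_ge0 rmono rsub]; rewrite /restrict; split => [|//|A B AB|A B].
- by rewrite imset0.
- by rewrite rmono ?imsetS.
by rewrite imsetU imsetI ?rsub // => x y _ _; apply: f_inj.
Qed.

Lemma q_representable_restrict (T1 : finType) (f : T1 -> T) r q :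
  injective f -> q_representable r q -> q_representable (restrict f r) q.
Proof.
move=> f_inj [F [m [V [cardF rE]]]]; exists F, m, (V \o f); split => // A.
by rewrite /restrict rE big_imset //= => x y _ _; apply: f_inj.
Qed.

Lemma even_representable_restrict (T1 : finType) (f : T1 -> T) r :
  injective f -> even_representable r -> even_representable (restrict f r).
Proof.
by move=> f_inj [k [k_pos rep]]; exists k; split => //; apply: q_representable_restrict.
Qed.

Lemma odd_representable_restrict (T1 : finType) (f : T1 -> T) r :
  injective f -> odd_representable r -> odd_representable (restrict f r).
Proof.
move=> f_inj [p [k [p_prime p_odd k_pos rep]]]; exists p, k; split => //.
exact: q_representable_restrict.
Qed.

Record cone_atom := ConeAtom {
  weight : R;
  atom : rankfun R T;
  weight_ge0 : 0 <= weight;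
  atom_representable : representable atom }.

Definition cone_comb (s : seq cone_atom) : rankfun R T :=
  fun A => \sum_(a <- s) weight a * atom a A.

Lemma rep_cone_comb h : rep_cone h -> exists s, h = cone_comb s.
Proof.
move/(_ (fun f => exists s, f = cone_comb s)); apply; first split.
- move=> f g [s ->] [s' ->]; exists (s ++ s'); apply: boolp.funext => A.
  by rewrite /cone_comb big_cat.
- move=> c f c_ge0 [s ->].
  pose scale a := ConeAtom (mulr_ge0 c_ge0 (weight_ge0 a)) (atom_representable a).
  exists (map scale s); apply: boolp.funext => A.
  by rewrite /cone_comb big_map mulr_sumr; apply: eq_bigr => a _; rewrite mulrA.
by move=> g g_rep; exists [:: ConeAtom ler01 g_rep]; apply: boolp.funext => A;
  rewrite /cone_comb big_seq1 mul1r.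
Qed.

Lemma cone_comb_split_le s (b : pred cone_atom) A B :
  cone_comb s A + cone_comb s B <= cone_comb s setT +
    \sum_(a <- s | b a) weight a * atom a A + \sum_(a <- s | ~~ b a) weight a * atom a B.
Proof.
have atom_le a C : weight a * atom a C <= weight a * atom a setT.
  have [_ _ mono _] := representable_polymatroid (atom_representable a).
  by rewrite ler_wpM2l ?weight_ge0 ?mono ?subsetT.
rewrite /cone_comb [\sum_(a <- s) _ * atom a A](bigID b).
rewrite [\sum_(a <- s) _ * atom a B](bigID b) [\sum_(a <- s) _ * atom a setT](bigID b) /=.
have : \sum_(a <- s | ~~ b a) weight a * atom a A <=
       \sum_(a <- s | ~~ b a) weight a * atom a setT by apply: ler_sum => a _.
have : \sum_(a <- s | b a) weight a * atom a B <=
       \sum_(a <- s | b a) weight a * atom a setT by apply: ler_sum => a _.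
lra.
Qed.

End Representations.

Lemma restrict_mass_bound (R : realType) (T1 T : finType) (P : rankfun R T1)
    (Q : rankfun R T1 -> Prop) :
  0 < P setT -> ~ almost Q P -> connected_matroid P ->
  exists2 M : R, 0 <= M & forall (f : T1 -> T) (s : seq (cone_atom R T))
    (b : pred (cone_atom R T)) (eta : R),
  injective f -> (forall a, b a -> Q (restrict f (atom a))) ->
  (forall A : {set T1}, `|cone_comb s (f @: A) - P A| <= eta) ->
  \sum_(a <- s | b a) weight a * atom a (f @: setT) <= M * eta.
Proof.
move=> P_pos not_almost P_conn; have [M M_ge0 mass] := Q_mass_bound P_pos not_almost P_conn.
exists M => // f s b eta f_inj bQ close.
apply: (mass _ s _ (fun a => restrict f (atom a))) => // a; first exact: weight_ge0.
exact: polymatroid_restrict f_inj (representable_polymatroid (atom_representable a)).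
Qed.

Lemma preimset_imset (aT rT : finType) (f : aT -> rT) (A : {set aT}) :
  injective f -> f @^-1: (f @: A) = A.
Proof. by move=> f_inj; apply/setP => x; rewrite inE mem_imset. Qed.

Section TruncatedDirectSum.
Variables (R : realType) (T1 T2 : finType).
Variables (Phi1 : rankfun R T1) (Phi2 : rankfun R T2) (eps : R).
Hypotheses (Phi1_poly : polymatroid Phi1) (Phi2_poly : polymatroid Phi2).
Hypotheses (eps_ge0 : 0 <= eps) (eps_le1 : eps <= Phi1 setT) (eps_le2 : eps <= Phi2 setT).
Local Notation h := (truncate (direct_sum Phi1 Phi2) eps).

Lemma preimset_inr_inl (A : {set T1}) : (@inr T1 T2) @^-1: (inl @: A) = set0.
Proof. by apply/setP => x; rewrite !inE; apply/imsetP => -[]. Qed.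

Lemma preimset_inl_inr (A : {set T2}) : (@inl T1 T2) @^-1: (inr @: A) = set0.
Proof. by apply/setP => x; rewrite !inE; apply/imsetP => -[]. Qed.

Lemma truncate_direct_sum_inl (A : {set T1}) : h (inl @: A) = Phi1 A.
Proof.
have [_ _ mono1 _] := Phi1_poly; have [P20 _ _ _] := Phi2_poly.
rewrite /truncate /direct_sum preimset_imset ?preimset_inr_inl //; last exact: inl_inj.
rewrite !preimsetT P20 addr0 min_l // (le_trans (mono1 _ _ (subsetT A))) //.
by rewrite -addrA lerDl subr_ge0.
Qed.

Lemma truncate_direct_sum_inr (A : {set T2}) : h (inr @: A) = Phi2 A.
Proof.
have [P10 _ _ _] := Phi1_poly; have [_ _ mono2 _] := Phi2_poly.
rewrite /truncate /direct_sum preimset_imset ?preimset_inl_inr //; last exact: inr_inj.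
rewrite !preimsetT P10 add0r min_l // (le_trans (mono2 _ _ (subsetT A))) //.
by rewrite addrAC lerDr subr_ge0.
Qed.

Lemma truncate_direct_sum_setT : h setT = Phi1 setT + Phi2 setT - eps.
Proof.
by rewrite /truncate /direct_sum !preimsetT min_r // lerBlDr lerDl.
Qed.

End TruncatedDirectSum.

Theorem theorem5 (R : realType) (T1 T2 : finType)
  (Phi1 : rankfun R T1) (Phi2 : rankfun R T2) (eps : R) :
  connected_matroid Phi1 -> even_representable Phi1 ->
  ~ almost_odd_representable Phi1 ->
  connected_matroid Phi2 -> odd_representable Phi2 ->
  ~ almost_even_representable Phi2 ->
  0 < eps -> eps <= Num.min (Phi1 finset.setT) (Phi2 finset.setT) ->
  ~ cc_representable (truncate (direct_sum Phi1 Phi2) eps).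
Proof.
move=> conn1 _ not_almost1 conn2 _ not_almost2 eps_pos.
rewrite le_min => /andP[eps_le1 eps_le2] cc.
have [[[poly1 _ _] _] [[poly2 _ _] _]] := (conn1, conn2).
have [M1 M1_ge0 mass1] :=
  restrict_mass_bound (T1 + T2)%type (lt_le_trans eps_pos eps_le1) not_almost1 conn1.
have [M2 M2_ge0 mass2] :=
  restrict_mass_bound (T1 + T2)%type (lt_le_trans eps_pos eps_le2) not_almost2 conn2.
have d_pos : 0 < 4 + M1 + M2 by lra.
pose e := eps / (4 + M1 + M2); have e_pos : 0 < e by rewrite divr_gt0.
have [_ [/rep_cone_comb[s ->] close]] := cc e e_pos.
have h_inl := truncate_direct_sum_inl poly1 poly2 eps_le2.
have h_inr := truncate_direct_sum_inr poly1 poly2 eps_le1.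
have h_setT := truncate_direct_sum_setT Phi1 Phi2 (ltW eps_pos).
pose odd_atom (a : cone_atom R (T1 + T2)%type) := `[< odd_representable (atom a) >].
have odd_small : \sum_(a <- s | odd_atom a) weight a * atom a (inl @: setT) <= M1 * e.
  apply: mass1 inl_inj _ _ => [a /asboolP|A]; last by rewrite -h_inl distrC ltW.
  exact: odd_representable_restrict inl_inj.
have even_small :
    \sum_(a <- s | ~~ odd_atom a) weight a * atom a (inr @: setT) <= M2 * e.
  apply: mass2 inr_inj _ _ => [a /asboolPn not_odd|A]; last by rewrite -h_inr distrC ltW.
  apply: even_representable_restrict inr_inj _.
  by have [|//] := representable_even_or_odd (atom_representable a).
have := cone_comb_split_le s odd_atom (inl @: setT) (inr @: setT).
have := close setT; have := close (inl @: setT); have := close (inr @: setT).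
rewrite h_inl h_inr h_setT !ltr_norml => /andP[? ?] /andP[? ?] /andP[? ?] ?.
have eps_eq : eps = e * (4 + M1 + M2) by rewrite mulfVK // lt0r_neq0.
nra.
Qed.
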